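(* If $\mathcal{A}$ is a strong $T_0$-family, then every nonseparable closed linear subspace of $\mathcal{X}_\mathcal{A}$ contains a subspace isomorphic to $\ell_2$.
   Context: $c_{00}(\omega_1)$ is the set of finitely supported $x\in\mathbb{R}^{\omega_1}$; $\|x\|_\mathcal{A}=\sup_{A\in\mathcal{A}}\sqrt{\sum_{\alpha\in A}x(\alpha)^2}$ and $\mathcal{X}_\mathcal{A}$ is the closure of $c_{00}(\omega_1)$ in $\{x\in\mathbb{R}^{\omega_1}:\|x\|_\mathcal{A}<\infty\}$. For disjoint $A,B$, $A\otimes B=\{\{\alpha,\beta\}:\alpha\in A,\beta\in B\}$. A function $c=(c_0,c_1):[\omega_1]^2\to I\times J$ ($0,1\in I$, $J\ne\emptyset$) is a $T$-coloring if for every uncountable pairwise disjoint family $\{\{a_\xi(0),a_\xi(1)\}:\xi<\omega_1\}$ of pairs and all $(i_0,j_0),(i_1,j_1)\in I\times J$ there are $\xi<\eta$ with $c(\{a_\xi(0),a_\eta(0)\})=(i_0,j_0)$, $c(\{a_\xi(1),a_\eta(1)\})=(i_1,j_1)$; it is a strong $T$-coloring if moreover for every uncountable pairwise disjoint family $\{A_\xi:\xi<\omega_1\}$ of finite subsets of $\omega_1$ there are $\xi<\eta$ with $c_0[A_\xi\otimes A_\eta]=\{0\}$ and $\xi<\eta$ with $c_0[A_\xi\otimes A_\eta]=\{1\}$. A strong $T_0$-family is $\mathcal{A}_c=\{a\subseteq\omega_1\text{ finite}:c_0[[a]^2]\subseteq\{0\}\}$ for a strong $T$-coloring $c$. *)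

From Stdlib Require Import Reals List.
From Coquelicot Require Import Coquelicot.
Open Scope R_scope.

Definition countable_on {W : Type} (P : W -> Prop) : Prop :=
  exists f : W -> nat, forall x y, P x -> P y -> f x = f y -> x = y.

Definition is_omega1 (W : Type) (lt : W -> W -> Prop) : Prop :=
  (forall x, ~ lt x x) /\
  (forall x y z, lt x y -> lt y z -> lt x z) /\
  (forall x y, lt x y \/ x = y \/ lt y x) /\
  well_founded lt /\
  ~ countable_on (fun _ : W => True) /\
  (forall x, countable_on (fun y => lt y x)).

(* ---------- colorings ----------
   A coloring of [W]^2 is represented by a symmetric c : W -> W -> I * J
   (values on the diagonal are irrelevant). *)
Definition sym_coloring {W I J : Type} (c : W -> W -> I * J) : Prop :=
  forall a b, c a b = c b a.

Definition T_coloring {W I J : Type} (lt : W -> W -> Prop)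
  (c : W -> W -> I * J) : Prop :=
  forall a0 a1 : W -> W,
    (forall xi, a0 xi <> a1 xi) ->
    (forall xi eta, xi <> eta ->
       a0 xi <> a0 eta /\ a0 xi <> a1 eta /\ a1 xi <> a0 eta /\ a1 xi <> a1 eta) ->
    forall p0 p1 : I * J,
      exists xi eta, lt xi eta /\ c (a0 xi) (a0 eta) = p0 /\ c (a1 xi) (a1 eta) = p1.

Definition c0_const_on {W I J : Type} (c : W -> W -> I * J)
  (A B : list W) (i : I) : Prop :=
  forall a b, In a A -> In b B -> fst (c a b) = i.

Definition strong_T_coloring {W I J : Type} (lt : W -> W -> Prop)
  (i0 i1 : I) (c : W -> W -> I * J) : Prop :=
  T_coloring lt c /\
  forall A : W -> list W,
    (forall xi, A xi <> nil) ->
    (forall xi eta, xi <> eta -> forall a, In a (A xi) -> ~ In a (A eta)) ->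
    (exists xi eta, lt xi eta /\ c0_const_on c (A xi) (A eta) i0) /\
    (exists xi eta, lt xi eta /\ c0_const_on c (A xi) (A eta) i1).

(* The strong T_0-family A_c: finite sets (duplicate-free lists) a with
   c_0[[a]^2] subset {0}. *)
Definition T0_family {W I J : Type} (i0 : I) (c : W -> W -> I * J)
  (a : list W) : Prop :=
  NoDup a /\
  forall x y, In x a -> In y a -> x <> y -> fst (c x y) = i0.

Definition sqsum {W : Type} (x : W -> R) (a : list W) : R :=
  fold_right (fun w acc => x w ^ 2 + acc) 0 a.

Definition normA_bar {W : Type} (fam : list W -> Prop) (x : W -> R) : Rbar :=
  Lub_Rbar (fun r => exists a, fam a /\ r = sqrt (sqsum x a)).

Definition normA {W : Type} (fam : list W -> Prop) (x : W -> R) : R :=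
  real (normA_bar fam x).

Definition vsub {W : Type} (x y : W -> R) : W -> R := fun w => x w - y w.

Definition fin_supp {W : Type} (z : W -> R) : Prop :=
  exists s : list W, forall w, ~ In w s -> z w = 0.

(* X_A: closure of c_00 in {x : ||x||_A < oo} *)
Definition in_XA {W : Type} (fam : list W -> Prop) (x : W -> R) : Prop :=
  is_finite (normA_bar fam x) /\
  forall eps, 0 < eps ->
    exists z, fin_supp z /\ normA fam (vsub x z) < eps.

Definition closed_subspace {W : Type} (fam : list W -> Prop)
  (Y : (W -> R) -> Prop) : Prop :=
  (forall y, Y y -> in_XA fam y) /\
  Y (fun _ => 0) /\
  (forall y z, Y y -> Y z -> Y (fun w => y w + z w)) /\
  (forall (r : R) y, Y y -> Y (fun w => r * y w)) /\
  (forall x, in_XA fam x ->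
     (forall eps, 0 < eps -> exists y, Y y /\ normA fam (vsub x y) < eps) ->
     Y x).

Definition separable_sub {W : Type} (fam : list W -> Prop)
  (Y : (W -> R) -> Prop) : Prop :=
  exists d : nat -> (W -> R),
    (forall n, Y (d n)) /\
    forall y, Y y -> forall eps, 0 < eps ->
      exists n, normA fam (vsub y (d n)) < eps.

Definition in_l2 (u : nat -> R) : Prop := ex_series (fun n => u n ^ 2).
Definition norm2 (u : nat -> R) : R := sqrt (Series (fun n => u n ^ 2)).

Definition contains_l2 {W : Type} (fam : list W -> Prop)
  (Y : (W -> R) -> Prop) : Prop :=
  exists L : (nat -> R) -> (W -> R),
    (forall u, in_l2 u -> Y (L u)) /\
    (forall u v, in_l2 u -> in_l2 v ->
       forall w, L (fun n => u n + v n) w = L u w + L v w) /\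
    (forall (r : R) u, in_l2 u -> forall w, L (fun n => r * u n) w = r * L u w) /\
    exists a b, 0 < a /\ 0 < b /\
      forall u, in_l2 u ->
        a * norm2 u <= normA fam (L u) /\ normA fam (L u) <= b * norm2 u.

From Stdlib Require Import Reals List Lra Lia ZArith Cantor.
From Stdlib Require Import Classical ClassicalEpsilon FunctionalExtensionality.
From Coquelicot Require Import Coquelicot.
Open Scope R_scope.

(* Because [Y] is not separable, for every countable [S] and [eps > 0] it contains a norm-one
   vector whose restriction to [S] has norm at most [eps]: otherwise restriction to [S] would
   embed [Y] into a separable space. Approximating such vectors by finitely supported ones and
   recursing along omega_1 gives blocks [(y, z, B)], indexed by [omega_1 x nat], with pairwise
   disjoint supports, [y] in [Y] close to [z], and [z] of norm at least 1/2 on a set [B] of the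
   family. The strong T-coloring and a diagonal argument extract a sequence of blocks whose sets
   [B_n] are pairwise 0-homogeneous, so that their finite unions stay in the family. As the [z_n]
   are disjointly supported, [sum u_n z_n] has norm at most [2 |u|_2], and at least [|u|_2 / 2]
   on the union of the [B_n]; since the errors [|y_n - z_n|] are summable to at most 1/8,
   [u |-> sum u_n y_n] is an isomorphic embedding of l_2 into [Y]. *)

(** * Square sums over finite sets *)

Lemma sqrt_le_of_le_sq x y : 0 <= y -> x <= y ^ 2 -> sqrt x <= y.
Proof.
  intros Hy Hx. destruct (Rle_lt_dec x 0) as [Hn|Hp].
  - rewrite sqrt_neg_0; auto.
  - rewrite <- (sqrt_pow2 y Hy). apply sqrt_le_1; lra.
Qed.

Lemma le_sqrt_of_sq_le x y : 0 <= x -> x ^ 2 <= y -> x <= sqrt y.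
Proof. intros Hx Hy. rewrite <- (sqrt_pow2 x Hx). apply sqrt_le_1_alt. auto. Qed.

Lemma sqrt_lt_of_lt_sq x y : 0 <= x -> 0 < y -> x < y ^ 2 -> sqrt x < y.
Proof. intros Hx Hy H. rewrite <- (sqrt_pow2 y) by lra. apply sqrt_lt_1_alt. lra. Qed.

Lemma Rabs_m1 : Rabs (-1) = 1.
Proof. rewrite Rabs_left; lra. Qed.

Section NormOn.
Context {W : Type}.
Implicit Types (x y t : W -> R) (a : list W) (w : W).

Definition sumprod x y a : R := fold_right (fun w acc => x w * y w + acc) 0 a.

Definition norm_on x a : R := sqrt (sqsum x a).

Lemma sqsum_cons x b a : sqsum x (b :: a) = x b ^ 2 + sqsum x a.
Proof. reflexivity. Qed.

Lemma sqsum_nonneg x a : 0 <= sqsum x a.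
Proof. induction a as [|w a IH]; [simpl; lra|]. rewrite sqsum_cons. pose proof (pow2_ge_0 (x w)). lra. Qed.

Lemma sqsum_zero a : sqsum (fun _ : W => 0) a = 0.
Proof. induction a as [|w a IH]; [|rewrite sqsum_cons, IH]; simpl; ring. Qed.

Lemma sqsum_add_pointwise x y t a :
  (forall w, In w a -> x w ^ 2 = y w ^ 2 + t w ^ 2) -> sqsum x a = sqsum y a + sqsum t a.
Proof.
  induction a as [|b a IH]; intros H; [simpl; ring|].
  rewrite !sqsum_cons, H by (left; reflexivity).
  rewrite IH by (intros; apply H; right; auto). ring.
Qed.

Lemma sqsum_ext x y a : (forall w, In w a -> x w ^ 2 = y w ^ 2) -> sqsum x a = sqsum y a.
Proof.
  intros H. rewrite (sqsum_add_pointwise x y (fun _ => 0) a), sqsum_zero; [ring|].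
  intros w Hw. rewrite H; auto. ring.
Qed.

Lemma sqsum_le x y a : (forall w, In w a -> x w ^ 2 <= y w ^ 2) -> sqsum x a <= sqsum y a.
Proof.
  induction a as [|b a IH]; intros H; [simpl; lra|]. rewrite !sqsum_cons.
  pose proof (H b (or_introl eq_refl)). pose proof (IH (fun w Hw => H w (or_intror Hw))). lra.
Qed.

Lemma sqsum_scal r x a : sqsum (fun w => r * x w) a = r ^ 2 * sqsum x a.
Proof. induction a as [|w a IH]; simpl; [|rewrite IH]; ring. Qed.

Lemma sqsum_app x a (b : list W) : sqsum x (a ++ b) = sqsum x a + sqsum x b.
Proof. induction a as [|w a IH]; simpl; [|rewrite IH]; ring. Qed.

Lemma sqsum_filter x (p : W -> bool) a :
  (forall w, In w a -> p w = false -> x w = 0) -> sqsum x (filter p a) = sqsum x a.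
Proof.
  induction a as [|b a IH]; intros H; [reflexivity|]. simpl filter.
  assert (IHa : sqsum x (filter p a) = sqsum x a) by (apply IH; simpl in H; auto).
  destruct (p b) eqn:E; simpl; rewrite IHa; [reflexivity|].
  rewrite H by (simpl; auto). ring.
Qed.

Lemma sqsum_affine x y (s : R) a :
  sqsum (fun w => x w + s * y w) a = sqsum x a + 2 * s * sumprod x y a + s ^ 2 * sqsum y a.
Proof. induction a as [|w a IH]; simpl; [|rewrite IH]; ring. Qed.

(* The discriminant of the nonnegative quadratic [s |-> sqsum (x + s y) a]. *)
Lemma sumprod_Cauchy_Schwarz x y a : sumprod x y a ^ 2 <= sqsum x a * sqsum y a.
Proof.
  set (A := sqsum x a). set (B := sumprod x y a). set (C := sqsum y a).
  assert (H : forall s : R, 0 <= A + 2 * s * B + s ^ 2 * C).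
  { intros s. unfold A, B, C. rewrite <- sqsum_affine. apply sqsum_nonneg. }
  assert (HA : 0 <= A) by apply sqsum_nonneg.
  destruct (Req_dec C 0) as [C0|Cn].
  - destruct (Req_dec B 0) as [B0|Bn]; [rewrite B0, C0; lra|].
    specialize (H (- (A + 1) / (2 * B))).
    replace (2 * (- (A + 1) / (2 * B)) * B) with (- (A + 1)) in H by (field; auto).
    rewrite C0 in H. lra.
  - set (s := B / C). assert (Bs : B = s * C) by (unfold s; field; auto).
    specialize (H (- s)). rewrite Bs in H |- *.
    assert (0 <= C) by apply sqsum_nonneg. nra.
Qed.

Lemma norm_on_ge0 x a : 0 <= norm_on x a.
Proof. apply sqrt_pos. Qed.

Lemma norm_on_sq x a : norm_on x a ^ 2 = sqsum x a.
Proof. apply pow2_sqrt, sqsum_nonneg. Qed.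

Lemma norm_on_ext x y a : (forall w, In w a -> x w = y w) -> norm_on x a = norm_on y a.
Proof. intros H. unfold norm_on. f_equal. apply sqsum_ext. intros w Hw. rewrite H; auto. Qed.

Lemma norm_on_nil x : norm_on x nil = 0.
Proof. apply sqrt_0. Qed.

Lemma norm_on_single x w : norm_on x (w :: nil) = Rabs (x w).
Proof.
  unfold norm_on. rewrite sqsum_cons. simpl (sqsum x nil).
  rewrite Rplus_0_r, <- Rsqr_pow2. apply sqrt_Rsqr_abs.
Qed.

Lemma norm_on_scal r x a : norm_on (fun w => r * x w) a = Rabs r * norm_on x a.
Proof.
  unfold norm_on. rewrite sqsum_scal, sqrt_mult_alt by apply pow2_ge_0.
  rewrite <- Rsqr_pow2, sqrt_Rsqr_abs. reflexivity.
Qed.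

Lemma norm_on_triangle x y a : norm_on (fun w => x w + y w) a <= norm_on x a + norm_on y a.
Proof.
  pose proof (norm_on_ge0 x a). pose proof (norm_on_ge0 y a).
  unfold norm_on at 1. apply sqrt_le_of_le_sq; [lra|].
  rewrite (sqsum_ext _ (fun w => x w + 1 * y w)) by (intros; ring).
  rewrite sqsum_affine, <- (norm_on_sq x), <- (norm_on_sq y).
  assert (sumprod x y a <= norm_on x a * norm_on y a).
  { pose proof (sumprod_Cauchy_Schwarz x y a) as Hcs.
    rewrite <- (norm_on_sq x), <- (norm_on_sq y), <- Rpow_mult_distr, <- !Rsqr_pow2 in Hcs.
    apply Rsqr_le_abs_0 in Hcs.
    rewrite (Rabs_pos_eq (_ * _)) in Hcs by (apply Rmult_le_pos; auto).
    pose proof (Rle_abs (sumprod x y a)). lra. }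
  replace ((norm_on x a + norm_on y a) ^ 2)
    with (norm_on x a ^ 2 + 2 * (norm_on x a * norm_on y a) + norm_on y a ^ 2) by ring.
  lra.
Qed.

Lemma norm_on_sub_sym x y a :
  norm_on (fun w => x w - y w) a = norm_on (fun w => y w - x w) a.
Proof.
  rewrite (norm_on_ext (fun w => x w - y w) (fun w => -1 * (y w - x w))) by (intros; ring).
  rewrite norm_on_scal, Rabs_m1. ring.
Qed.

Lemma norm_on_sub x y a : norm_on (fun w => x w - y w) a <= norm_on x a + norm_on y a.
Proof.
  rewrite (norm_on_ext _ (fun w => x w + (-1) * y w)) by (intros; ring).
  eapply Rle_trans; [apply norm_on_triangle|]. rewrite norm_on_scal, Rabs_m1. lra.
Qed.

Lemma norm_on_le_add_sub x y a : norm_on x a <= norm_on y a + norm_on (fun w => x w - y w) a.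
Proof.
  rewrite (norm_on_ext x (fun w => y w + (x w - y w))) at 1 by (intros; ring).
  apply norm_on_triangle.
Qed.

Lemma norm_on_le x y a :
  (forall w, In w a -> Rabs (x w) <= Rabs (y w)) -> norm_on x a <= norm_on y a.
Proof.
  intros H. apply sqrt_le_1_alt, sqsum_le. intros w Hw.
  rewrite <- (pow2_abs (x w)), <- (pow2_abs (y w)). apply pow_incr. split; [apply Rabs_pos|auto].
Qed.

Lemma norm_on_point b (t : R) a : NoDup a ->
  norm_on (fun v => if excluded_middle_informative (v = b) then t else 0) a <= Rabs t.
Proof.
  intros Ha. apply sqrt_le_of_le_sq; [apply Rabs_pos|]. rewrite pow2_abs.
  induction a as [|w a IH]; simpl; [pose proof (pow2_ge_0 t); lra|].
  apply NoDup_cons_iff in Ha as [Hw Ha].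
  destruct (excluded_middle_informative (w = b)) as [<-|Hne].
  - rewrite (sqsum_ext _ (fun _ => 0)), sqsum_zero; [lra|].
    intros v Hv. destruct excluded_middle_informative; [subst; contradiction|reflexivity].
  - specialize (IH Ha). lra.
Qed.

Lemma norm_on_le_l1 x a (L : list W) : NoDup a ->
  (forall v, ~ In v L -> x v = 0) -> norm_on x a <= fold_right (fun v acc => Rabs (x v) + acc) 0 L.
Proof.
  intros Ha. revert x. induction L as [|b L IH]; intros x Hx; simpl.
  - rewrite (norm_on_ext x (fun v => 0 * x v)) by (intros v _; rewrite Hx; auto; ring).
    rewrite norm_on_scal, Rabs_R0. lra.
  - set (xo := fun v => if excluded_middle_informative (v = b) then 0 else x v).
    rewrite (norm_on_ext x (fun v => (if excluded_middle_informative (v = b) then x b else 0) + xo v))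
      by (intros v _; unfold xo; destruct excluded_middle_informative; subst; ring).
    eapply Rle_trans; [apply norm_on_triangle|].
    apply Rplus_le_compat; [apply norm_on_point; auto|].
    eapply Rle_trans.
    + apply IH. intros v Hv. unfold xo. destruct excluded_middle_informative; auto.
      apply Hx. simpl. intuition.
    + clear IH Hx. induction L as [|v L IHL]; simpl; [lra|].
      apply Rplus_le_compat; auto. unfold xo. destruct excluded_middle_informative; [|lra].
      rewrite Rabs_R0. apply Rabs_pos.
Qed.

End NormOn.

Section NormA.
Context {W : Type} (fam : list W -> Prop) (fam_nil : fam nil).
Implicit Types (x y : W -> R) (a : list W).

(* [normA] is [real] of an extended real, hence the junk value [0] when the supremum is
   infinite: most statements below carry [normA_finite] hypotheses. *)
Definition normA_finite x : Prop := is_finite (normA_bar fam x).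

Let normA_set x := fun r => exists a, fam a /\ r = norm_on x a.

Lemma normA_finite_le x M : (forall a, fam a -> norm_on x a <= M) ->
  normA_finite x /\ normA fam x <= M.
Proof.
  intros H. unfold normA_finite, normA, normA_bar. fold (norm_on x).
  destruct (Lub_Rbar_correct (normA_set x)) as [ub lub].
  assert (H1 : Rbar_le (Lub_Rbar (normA_set x)) M).
  { apply lub. intros r [a [Ha ->]]. apply H, Ha. }
  assert (H2 : Rbar_le 0 (Lub_Rbar (normA_set x))).
  { apply ub. exists nil. rewrite norm_on_nil. auto. }
  unfold normA_set in *. destruct (Lub_Rbar _); simpl in *; try contradiction.
  split; [reflexivity|auto].
Qed.

Lemma norm_on_le_normA x a : normA_finite x -> fam a -> norm_on x a <= normA fam x.
Proof.
  intros Hf Ha. unfold normA_finite, normA, normA_bar in *. fold (norm_on x) in *.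
  destruct (Lub_Rbar_correct (normA_set x)) as [ub _].
  specialize (ub (norm_on x a) (ex_intro _ a (conj Ha eq_refl))).
  unfold normA_set in *. destruct (Lub_Rbar _); simpl in *; easy.
Qed.

Lemma normA_ge0 x : normA_finite x -> 0 <= normA fam x.
Proof. intros Hf. rewrite <- (norm_on_nil x). apply norm_on_le_normA; auto. Qed.

Lemma normA_approx x eps : 0 < eps -> exists a, fam a /\ normA fam x - eps < norm_on x a.
Proof.
  intros He. apply NNPP. intros Hn.
  assert (H : forall a, fam a -> norm_on x a <= normA fam x - eps).
  { intros a Ha. apply Rnot_lt_le. intros Hl. apply Hn. exists a. auto. }
  apply normA_finite_le in H as [_ H]. lra.
Qed.

Lemma normA_triangle x y : normA_finite x -> normA_finite y ->
  normA_finite (fun w => x w + y w) /\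
  normA fam (fun w => x w + y w) <= normA fam x + normA fam y.
Proof.
  intros Hx Hy. apply normA_finite_le. intros a Ha.
  eapply Rle_trans; [apply norm_on_triangle|].
  apply Rplus_le_compat; apply norm_on_le_normA; auto.
Qed.

Lemma normA_le x y : normA_finite y -> (forall w, Rabs (x w) <= Rabs (y w)) ->
  normA_finite x /\ normA fam x <= normA fam y.
Proof.
  intros Hy H. apply normA_finite_le. intros a Ha.
  eapply Rle_trans; [apply norm_on_le; auto|]. apply norm_on_le_normA; auto.
Qed.

Lemma normA_scal r x : normA_finite x ->
  normA_finite (fun w => r * x w) /\ normA fam (fun w => r * x w) = Rabs r * normA fam x.
Proof.
  intros Hx.
  destruct (normA_finite_le (fun w => r * x w) (Rabs r * normA fam x)) as [Hrx Hle].
  { intros a Ha. rewrite norm_on_scal.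
    apply Rmult_le_compat_l; [apply Rabs_pos|]. apply norm_on_le_normA; auto. }
  split; auto. apply Rle_antisym; auto.
  destruct (Req_dec r 0) as [->|Hr]; [rewrite Rabs_R0, Rmult_0_l; apply normA_ge0; auto|].
  assert (Hr' : 0 < Rabs r) by (apply Rabs_pos_lt; auto).
  apply Rmult_le_reg_l with (/ Rabs r); [apply Rinv_0_lt_compat; auto|].
  rewrite <- Rmult_assoc, Rinv_l, Rmult_1_l by lra.
  apply Rnot_lt_le. intros Hl.
  destruct (normA_approx x (normA fam x - / Rabs r * normA fam (fun w => r * x w)))
    as [a [Ha Hlt]]; [lra|].
  pose proof (norm_on_le_normA _ a Hrx Ha) as Hle'. rewrite norm_on_scal in Hle'.
  apply (Rmult_le_compat_l (/ Rabs r)) in Hle'; [|left; apply Rinv_0_lt_compat; auto].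
  rewrite <- Rmult_assoc, Rinv_l, Rmult_1_l in Hle' by lra. lra.
Qed.

End NormA.

(** * Countability and choice *)

Lemma countable_on_sub {X} (P Q : X -> Prop) :
  countable_on P -> (forall x, Q x -> P x) -> countable_on Q.
Proof. intros [f Hf] H. exists f. intros x y Hx Hy. apply Hf; auto. Qed.

Lemma countable_on_eq {X} (a : X) : countable_on (fun x => x = a).
Proof. exists (fun _ => 0%nat). intros x y -> ->. auto. Qed.

Lemma countable_on_nat (P : nat -> Prop) : countable_on P.
Proof. exists (fun n => n). auto. Qed.

Lemma countable_on_Union {X Y} (P : X -> Prop) (Q : X -> Y -> Prop) :
  countable_on P -> (forall x, P x -> countable_on (Q x)) ->
  countable_on (fun y => exists x, P x /\ Q x y).
Proof.
  intros [f Hf] HQ.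
  set (inj x := fun g : Y -> nat => forall y y', Q x y -> Q x y' -> g y = g y' -> y = y').
  set (g := fun x => epsilon (inhabits (fun _ : Y => 0%nat)) (inj x)).
  assert (Hg : forall x, P x -> inj x (g x)).
  { intros x Px. apply (epsilon_spec (inhabits (fun _ : Y => 0%nat)) (inj x)), HQ, Px. }
  exists (fun y => match excluded_middle_informative (exists x, P x /\ Q x y) with
                   | left H => let x := proj1_sig (constructive_indefinite_description _ H) in
                               to_nat (f x, g x y)
                   | right _ => 0%nat end).
  intros y y' Hy Hy'.
  destruct excluded_middle_informative as [H|]; [|contradiction].
  destruct excluded_middle_informative as [H'|]; [|contradiction].
  destruct (constructive_indefinite_description _ H) as [x [Px Qx]].
  destruct (constructive_indefinite_description _ H') as [x' [Px' Qx']].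
  intros E. apply to_nat_inj in E. injection E as E1 E2.
  assert (x = x') by (apply Hf; auto). subst x'. eapply Hg; eauto.
Qed.

Lemma countable_on_union {X} (P Q : X -> Prop) : countable_on P -> countable_on Q ->
  countable_on (fun x => P x \/ Q x).
Proof.
  intros HP HQ.
  apply (countable_on_sub (fun y => exists b : bool, True /\ (if b then P y else Q y))).
  - apply countable_on_Union.
    + exists (fun b : bool => if b then 1%nat else 0%nat). intros [|] [|] _ _ E; easy.
    + intros [|] _; auto.
  - intros x [Hx|Hx]; [exists true|exists false]; auto.
Qed.

Lemma countable_on_In {X} (l : list X) : countable_on (fun x => In x l).
Proof.
  induction l as [|b l IH].
  - exists (fun _ => 0%nat). intros x y [].
  - apply (countable_on_sub (fun x => x = b \/ In x l)).
    + apply countable_on_union; auto. apply countable_on_eq.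
    + intros x [H|H]; auto.
Qed.

Lemma uncountable_avoid {X} (U C : X -> Prop) : ~ countable_on U -> countable_on C ->
  exists u, U u /\ ~ C u.
Proof.
  intros HU HC. apply NNPP. intros Hn. apply HU. apply (countable_on_sub C); auto.
  intros x Ux. apply NNPP. intros Cn. apply Hn. exists x. auto.
Qed.

Lemma uncountable_fiber {X} (V : X -> Prop) (K : X -> nat) : ~ countable_on V ->
  exists m, ~ countable_on (fun x => V x /\ K x = m).
Proof.
  intros HV. apply NNPP. intros Hn. apply HV.
  apply (countable_on_sub (fun x => exists m, True /\ (V x /\ K x = m))).
  - apply countable_on_Union; [apply countable_on_nat|].
    intros m _. apply NNPP. intros Hm. apply Hn. exists m. auto.
  - intros x Vx. exists (K x). auto.
Qed.

Lemma wf_recursion_exists {X T} (lt : X -> X -> Prop) (wf : well_founded lt) (t0 : T)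
  (Rl : X -> (X -> T) -> T -> Prop) :
  (forall x h h' t, (forall y, lt y x -> h y = h' y) -> Rl x h t -> Rl x h' t) ->
  (forall x h, exists t, Rl x h t) -> exists g : X -> T, forall x, Rl x g (g x).
Proof.
  intros Hinv Hex.
  set (ext := fun x (f : forall y, lt y x -> T) (y : X) =>
                match excluded_middle_informative (lt y x) with
                | left p => f y p | right _ => t0 end).
  set (F := fun x (f : forall y, lt y x -> T) =>
              proj1_sig (constructive_indefinite_description _ (Hex x (ext x f)))).
  set (g := Fix wf (fun _ => T) F).
  exists g. intros x.
  assert (Eq : g x = F x (fun y _ => g y)).
  { unfold g. refine (Fix_eq wf (fun _ => T) F _ x). intros z f f' Hff.
    replace f' with f; auto.
    apply functional_extensionality_dep. intros y. apply functional_extensionality_dep. auto. }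
  rewrite Eq. unfold F. destruct (constructive_indefinite_description _ _) as [t Ht]. simpl.
  apply (Hinv x (ext x (fun y _ => g y))); auto.
  intros y Hy. unfold ext. destruct (excluded_middle_informative (lt y x)); easy.
Qed.

Lemma sequence_choice {T} (Q : list T -> T -> Prop) :
  (forall l, exists t, Q l t) -> exists f : nat -> T, forall k, Q (map f (seq 0 k)) (f k).
Proof.
  intros H.
  set (next := fun l => proj1_sig (constructive_indefinite_description _ (H l))).
  assert (Hn : forall l, Q l (next l)) by (intros l; apply proj2_sig).
  set (build := fix build (n : nat) : list T :=
    match n with O => nil | S n => build n ++ (next (build n) :: nil) end).
  exists (fun k => next (build k)).
  intros k. assert (E : build k = map (fun k => next (build k)) (seq 0 k)).
  { induction k as [|k IH]; auto. rewrite seq_S, map_app. simpl. rewrite <- IH. auto. }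
  rewrite <- E. auto.
Qed.

Lemma dependent_choice {St} (P : St -> Prop) (Rl : St -> St -> Prop) (s0 : St) : P s0 ->
  (forall s, P s -> exists s', P s' /\ Rl s s') ->
  exists f : nat -> St, f O = s0 /\ forall n, P (f n) /\ Rl (f n) (f (S n)).
Proof.
  intros H0 H.
  set (F := fun x : {s | P s} =>
    let (s', Hs') := constructive_indefinite_description _ (H (proj1_sig x) (proj2_sig x)) in
    exist P s' (proj1 Hs')).
  assert (HF : forall x, Rl (proj1_sig x) (proj1_sig (F x))).
  { intros [x Px]. unfold F. simpl. destruct constructive_indefinite_description as [s' [Ps' Hs']]. auto. }
  set (g := fix g (n : nat) : {s | P s} := match n with O => exist P s0 H0 | S n => F (g n) end).
  exists (fun n => proj1_sig (g n)). split; auto. intros n. split; [apply proj2_sig|apply HF].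
Qed.

(** * Countable dense families *)

Definition enumerable (T : Type) := exists e : nat -> T, forall t, exists n, e n = t.

Lemma enumerable_nat : enumerable nat.
Proof. exists (fun n => n). intros t. exists t. auto. Qed.

Lemma enumerable_prod A B : enumerable A -> enumerable B -> enumerable (A * B).
Proof.
  intros [ea Ha] [eb Hb]. exists (fun n => (ea (fst (of_nat n)), eb (snd (of_nat n)))).
  intros [a b]. destruct (Ha a) as [na Ea]. destruct (Hb b) as [nb Eb].
  exists (to_nat (na, nb)). rewrite cancel_of_to. simpl. congruence.
Qed.

Fixpoint decode_list (fuel n : nat) : list nat :=
  match fuel, n with
  | S f, S n' => fst (of_nat n') :: decode_list f (snd (of_nat n'))
  | _, _ => nil
  end.

Fixpoint encode_list (l : list nat) : nat :=
  match l with nil => O | a :: l => S (to_nat (a, encode_list l)) end.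

Lemma decode_encode_list l : decode_list (length l) (encode_list l) = l.
Proof.
  induction l; auto. cbn [length encode_list decode_list].
  rewrite cancel_of_to. cbn [fst snd]. rewrite IHl. auto.
Qed.

Lemma enumerable_list A : enumerable A -> enumerable (list A).
Proof.
  intros [ea Ha]. exists (fun n => map ea (decode_list (fst (of_nat n)) (snd (of_nat n)))).
  intros la. assert (H : exists ln, map ea ln = la).
  { induction la as [|a la [ln E]]; [exists nil; auto|]. destruct (Ha a) as [n En].
    exists (n :: ln). simpl. rewrite E, En. auto. }
  destruct H as [ln <-]. exists (to_nat (length ln, encode_list ln)).
  rewrite cancel_of_to. simpl. rewrite decode_encode_list. auto.
Qed.

Lemma grid_approx (v : R) (k : nat) : exists p m : nat,
  Rabs ((INR p - INR m) / (INR k + 1) - v) <= 1 / (INR k + 1).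
Proof.
  assert (Hk : 0 < INR k + 1) by (pose proof (pos_INR k); lra).
  set (r := v * (INR k + 1)). destruct (archimed r) as [H1 H2].
  assert (Hz : exists p m : nat, INR p - INR m = IZR (up r)).
  { destruct (Z_le_gt_dec 0 (up r)).
    - exists (Z.to_nat (up r)), O. rewrite (INR_IZR_INZ (Z.to_nat _)), Z2Nat.id by lia. simpl. lra.
    - exists O, (Z.to_nat (- up r)).
      rewrite (INR_IZR_INZ (Z.to_nat _)), Z2Nat.id, opp_IZR by lia. simpl. lra. }
  destruct Hz as [p [m E]]. exists p, m. rewrite E.
  replace (IZR (up r) / (INR k + 1) - v) with ((IZR (up r) - r) / (INR k + 1)) by (unfold r; field; lra).
  unfold Rdiv. rewrite Rabs_mult, Rabs_inv, (Rabs_right (INR k + 1)) by lra.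
  apply Rmult_le_compat_r; [left; apply Rinv_0_lt_compat; auto|].
  rewrite Rabs_right by lra. lra.
Qed.

Definition restrict {W} (S : W -> Prop) (x : W -> R) (w : W) : R :=
  if excluded_middle_informative (S w) then x w else 0.

Lemma restrict_abs {W} S (x : W -> R) w : Rabs (restrict S x w) <= Rabs (x w).
Proof.
  unfold restrict. destruct excluded_middle_informative; [lra|].
  rewrite Rabs_R0. apply Rabs_pos.
Qed.

Lemma restrict_sub {W} S (x y : W -> R) w :
  restrict S (fun v => x v - y v) w = restrict S x w - restrict S y w.
Proof. unfold restrict. destruct excluded_middle_informative; lra. Qed.

Lemma restrict_scal {W} S r (x : W -> R) w : restrict S (fun v => r * x v) w = r * restrict S x w.
Proof. unfold restrict. destruct excluded_middle_informative; lra. Qed.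

Lemma fold_right_sum_le {W} (g : W -> R) (L : list W) (B : R) : (forall v, In v L -> g v <= B) ->
  fold_right (fun v acc => g v + acc) 0 L <= INR (length L) * B.
Proof.
  induction L as [|b L IH]; intros H; cbn [fold_right length]; [simpl; lra|].
  rewrite S_INR. pose proof (H b (or_introl eq_refl)). pose proof (IH (fun v Hv => H v (or_intror Hv))).
  lra.
Qed.

Lemma norm_on_sub_restrict_compl {W} (S : W -> Prop) (y z : W -> R) a :
  norm_on (fun w => y w - restrict (fun v => ~ S v) z w) a <=
  2 * norm_on (fun w => y w - z w) a + norm_on (restrict S y) a.
Proof.
  rewrite (norm_on_ext _ (fun w => (y w - z w) + (restrict S y w - restrict S (fun v => y v - z v) w)))
    by (intros w _; unfold restrict; do 2 destruct excluded_middle_informative; tauto || ring).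
  eapply Rle_trans; [apply norm_on_triangle|].
  eapply Rle_trans; [apply Rplus_le_compat; [apply Rle_refl|apply norm_on_sub]|].
  assert (norm_on (restrict S (fun v => y v - z v)) a <= norm_on (fun w => y w - z w) a)
    by (apply norm_on_le; intros; apply (restrict_abs S (fun v => y v - z v))).
  lra.
Qed.

(* Step functions with values in [(1 / (k + 1)) Z] on the points coded by [f]; indexed by
   [(k, l)], they form a countable family. *)
Definition grid_fun {W} (f : W -> nat) (k : nat) (l : list (nat * (nat * nat))) (w : W) : R :=
  fold_right (fun t acc =>
    (if Nat.eq_dec (fst t) (f w) then (INR (fst (snd t)) - INR (snd (snd t))) / (INR k + 1) else 0)
    + acc) 0 l.

Lemma grid_fun_approx {W} (S : W -> Prop) (f : W -> nat) (z : W -> R) (k : nat) (L : list W) :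
  (forall x y, S x -> S y -> f x = f y -> x = y) -> NoDup L -> (forall w, In w L -> S w) ->
  exists l, forall w, S w ->
    (In w L -> Rabs (grid_fun f k l w - z w) <= 1 / (INR k + 1)) /\
    (~ In w L -> grid_fun f k l w = 0).
Proof.
  intros Hf. induction L as [|b L IH]; intros HL HLS.
  - exists nil. intros w _. split; [intros []|auto].
  - apply NoDup_cons_iff in HL as [Hb HL].
    destruct IH as [l Hl]; auto. { intros w Hw; apply HLS; right; auto. }
    destruct (grid_approx (z b) k) as [p [m Hpm]].
    exists ((f b, (p, m)) :: l). intros w Sw. cbn [fold_right grid_fun fst snd].
    fold (grid_fun f k l w).
    destruct (Nat.eq_dec (f b) (f w)) as [E|E].
    + apply Hf in E; [subst w|apply HLS; left; auto|auto].
      rewrite (proj2 (Hl b Sw) Hb), Rplus_0_r. split; auto. intros H. exfalso. apply H. left. auto.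
    + rewrite Rplus_0_l. assert (b <> w) by congruence.
      split; [intros [E'|E']; [contradiction|apply Hl; auto]|].
      intros Hn. apply Hl; auto. intros H'. apply Hn. right. auto.
Qed.

Lemma restrict_grid_approx {W} (S : W -> Prop) (f : W -> nat) (z : W -> R) (s : list W) (d : R) :
  (forall x y, S x -> S y -> f x = f y -> x = y) -> (forall w, ~ In w s -> z w = 0) -> 0 < d ->
  exists k l, forall a, NoDup a ->
    norm_on (fun w => restrict S z w - restrict S (grid_fun f k l) w) a <= d.
Proof.
  intros Hf Hs Hd.
  set (L := nodup (fun u v => excluded_middle_informative (u = v))
              (filter (fun w => if excluded_middle_informative (S w) then true else false) s)).
  assert (HL : forall w, In w L <-> In w s /\ S w).
  { intros w. unfold L. rewrite nodup_In, filter_In.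
    destruct excluded_middle_informative; intuition congruence. }
  destruct (INR_unbounded (INR (length L) / d)) as [k Hk].
  assert (Hk1 : 0 < INR k + 1) by (pose proof (pos_INR k); lra).
  destruct (grid_fun_approx S f z k L Hf (NoDup_nodup _ _)) as [l Hl]; [apply HL|].
  exists k, l. intros a Ha. eapply Rle_trans; [apply (norm_on_le_l1 _ a L Ha)|].
  - intros w Hw. unfold restrict. destruct excluded_middle_informative as [Sw|]; [|ring].
    rewrite (proj2 (Hl w Sw) Hw), Hs; [ring|]. intros Hs'. apply Hw, HL. auto.
  - eapply Rle_trans; [apply (fold_right_sum_le _ L (1 / (INR k + 1)))|].
    + intros w Hw. unfold restrict. destruct (HL w) as [[_ Sw] _]; auto.
      destruct excluded_middle_informative; [|contradiction].
      rewrite Rabs_minus_sym. apply Hl; auto.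
    + replace (INR (length L) * (1 / (INR k + 1))) with (INR (length L) / (INR k + 1)) by (field; lra).
      apply Rmult_le_reg_r with (INR k + 1); auto. unfold Rdiv.
      rewrite Rmult_assoc, Rinv_l, Rmult_1_r by lra.
      apply Rmult_lt_compat_r with (r := d) in Hk; auto.
      unfold Rdiv in Hk. rewrite Rmult_assoc, Rinv_l, Rmult_1_r in Hk by lra. nra.
Qed.

Definition tol (k : nat) : R := / 16 * (/ 2) ^ k.

Lemma tol_pos k : 0 < tol k.
Proof. unfold tol. apply Rmult_lt_0_compat; [lra|]. apply pow_lt. lra. Qed.

Lemma tol_antitone n k : (n <= k)%nat -> tol k <= tol n.
Proof.
  intros H. unfold tol. replace k with (n + (k - n))%nat by lia. rewrite pow_add.
  assert ((/ 2) ^ (k - n) <= 1) by (rewrite <- (pow1 (k - n)); apply pow_incr; lra).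
  pose proof (pow_lt (/ 2) n ltac:(lra)). nra.
Qed.

Lemma tol_le k : tol k <= / 16.
Proof. pose proof (tol_antitone 0 k (Nat.le_0_l k)). unfold tol at 2 in H. simpl in H. lra. Qed.

Fixpoint sum_from (f : nat -> R) (K m : nat) : R :=
  match m with O => 0 | S m => sum_from f K m + f (K + m)%nat end.

Lemma sum_from_le f g K m :
  (forall i, (i < m)%nat -> f (K + i)%nat <= g (K + i)%nat) -> sum_from f K m <= sum_from g K m.
Proof.
  induction m; intros H; simpl; [lra|].
  pose proof (H m ltac:(lia)). pose proof (IHm (fun i Hi => H i ltac:(lia))). lra.
Qed.

Lemma sum_from_nonneg f K m : (forall n, 0 <= f n) -> 0 <= sum_from f K m.
Proof. intros H. induction m; simpl; [lra|]. pose proof (H (K + m)%nat). lra. Qed.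

Lemma sum_from_scal r f K m : sum_from (fun n => r * f n) K m = r * sum_from f K m.
Proof. induction m; simpl; [|rewrite IHm]; ring. Qed.

Lemma sum_from_split f K m : sum_from f 0 (K + m) = sum_from f 0 K + sum_from f K m.
Proof.
  induction m; simpl; [rewrite Nat.add_0_r; ring|].
  rewrite Nat.add_succ_r. simpl. rewrite IHm. ring.
Qed.

Lemma sum_from_term f K m i : (forall n, 0 <= f n) -> (i < m)%nat -> f (K + i)%nat <= sum_from f K m.
Proof.
  intros H. induction m; intros Hi; [lia|]. simpl.
  pose proof (sum_from_nonneg f K m H). pose proof (H (K + m)%nat).
  destruct (Nat.eq_dec i m) as [->|Hne]; [lra|]. pose proof (IHm ltac:(lia)). lra.
Qed.

Lemma Rabs_le_sqrt_sum_from_sq (u : nat -> R) K m i : (i < m)%nat ->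
  Rabs (u (K + i)%nat) <= sqrt (sum_from (fun n => u n ^ 2) K m).
Proof.
  intros Hi. apply le_sqrt_of_sq_le; [apply Rabs_pos|]. rewrite pow2_abs.
  apply (sum_from_term (fun n => u n ^ 2)); auto. intros; apply pow2_ge_0.
Qed.

Lemma sum_from_tol K m : sum_from tol K m <= / 8.
Proof.
  unfold tol. rewrite sum_from_scal.
  assert (G : sum_from (fun n => (/ 2) ^ n) K m <= 2 - 2 * (/ 2) ^ (K + m)).
  { induction m; simpl.
    - rewrite Nat.add_0_r. assert ((/ 2) ^ K <= 1) by (rewrite <- (pow1 K); apply pow_incr; lra). lra.
    - rewrite Nat.add_succ_r. simpl. lra. }
  change (pow (/ 2)) with (fun n : nat => (/ 2) ^ n).
  pose proof (pow_lt (/ 2) (K + m) ltac:(lra)). lra.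
Qed.

Lemma sum_n_m_sum_from f n d : sum_n_m f n (n + d) = sum_from f n (S d).
Proof.
  induction d.
  - rewrite Nat.add_0_r, sum_n_n. simpl. rewrite Nat.add_0_r. symmetry. apply Rplus_0_l.
  - rewrite Nat.add_succ_r, sum_n_Sm, IHd by lia. simpl. rewrite Nat.add_succ_r. reflexivity.
Qed.

Lemma is_lim_seq_sum_from f l : is_series f l -> is_lim_seq (fun K => sum_from f 0 K) l.
Proof.
  intros H. apply is_lim_seq_incr_1. apply (is_lim_seq_ext (sum_n f)); auto.
  intros n. exact (sum_n_m_sum_from f 0 n).
Qed.

Lemma is_lim_seq_sqsum {W} (x : nat -> W -> R) (xl : W -> R) a :
  (forall w, is_lim_seq (fun M => x M w) (xl w)) ->
  is_lim_seq (fun M => sqsum (x M) a) (sqsum xl a).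
Proof.
  intros H. induction a as [|b a IH]; [apply is_lim_seq_const|].
  rewrite sqsum_cons. apply (is_lim_seq_ext (fun M => x M b * x M b + sqsum (x M) a)).
  - intros M. rewrite sqsum_cons. ring.
  - replace (xl b ^ 2) with (xl b * xl b) by ring.
    apply is_lim_seq_plus'; auto. apply is_lim_seq_mult'; auto.
Qed.

Lemma sqsum_le_of_lim {W} (x : nat -> W -> R) (xl : W -> R) a C :
  (forall w, is_lim_seq (fun M => x M w) (xl w)) -> (forall M, sqsum (x M) a <= C) ->
  sqsum xl a <= C.
Proof.
  intros H HC.
  apply (is_lim_seq_le _ (fun _ => C) _ _ HC (is_lim_seq_sqsum x xl a H) (is_lim_seq_const C)).
Qed.

Definition disjoint {X} (l1 l2 : list X) := forall x, In x l1 -> ~ In x l2.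

Section Space.
Context {W I J : Type} (i0 : I) (c : W -> W -> I * J).
Local Notation fam := (T0_family i0 c).
Local Notation N := (normA (T0_family i0 c)).

Lemma T0_family_nil : fam nil.
Proof. split; [constructor|intros x y []]. Qed.

Lemma T0_family_single w : fam (w :: nil).
Proof. split; [repeat constructor; auto|]. intros x y [<-|[]] [<-|[]] H; congruence. Qed.

Lemma T0_family_filter (p : W -> bool) a : fam a -> fam (filter p a).
Proof.
  intros [Hn Hc]. split; [apply NoDup_filter; auto|].
  intros x y Hx Hy. apply filter_In in Hx, Hy. apply Hc; tauto.
Qed.

Lemma normA_finite_supp (z : W -> R) (s : list W) :
  (forall w, ~ In w s -> z w = 0) -> normA_finite fam z.
Proof.
  intros Hs. set (L := nodup (fun u v => excluded_middle_informative (u = v)) s).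
  apply (normA_finite_le fam T0_family_nil z (fold_right (fun v acc => Rabs (z v) + acc) 0 L)).
  intros a [Ha _]. apply norm_on_le_l1; auto.
  intros v Hv. apply Hs. intros Hv'. apply Hv, nodup_In, Hv'.
Qed.

Variable Y : (W -> R) -> Prop.
Hypothesis HY : closed_subspace fam Y.

Lemma Y_zero : Y (fun _ => 0).
Proof. apply (proj1 (proj2 HY)). Qed.

Lemma Y_add y z : Y y -> Y z -> Y (fun w => y w + z w).
Proof. apply (proj1 (proj2 (proj2 HY))). Qed.

Lemma Y_scal r y : Y y -> Y (fun w => r * y w).
Proof. apply (proj1 (proj2 (proj2 (proj2 HY)))). Qed.

Lemma Y_sub y z : Y y -> Y z -> Y (fun w => y w - z w).
Proof.
  intros Hy Hz. replace (fun w => y w - z w) with (fun w => y w + (fun v => -1 * z v) w).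
  - apply Y_add, Y_scal; auto.
  - apply functional_extensionality. intros; ring.
Qed.

Lemma Y_closed x : in_XA fam x ->
  (forall eps, 0 < eps -> exists y, Y y /\ N (vsub x y) < eps) -> Y x.
Proof. apply (proj2 (proj2 (proj2 (proj2 HY)))). Qed.

Lemma Y_finite y : Y y -> normA_finite fam y.
Proof. intros Hy. apply (proj1 HY y Hy). Qed.

Lemma Y_approx y eps : Y y -> 0 < eps -> exists z s, (forall w, ~ In w s -> z w = 0) /\
  normA_finite fam (fun w => y w - z w) /\ N (fun w => y w - z w) < eps.
Proof.
  intros Hy He. destruct (proj2 (proj1 HY y Hy) eps He) as [z [[s Hs] Hz]].
  exists z, s. split; [|split]; auto.
  destruct (normA_scal fam T0_family_nil (-1) z (normA_finite_supp z s Hs)) as [Fz _].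
  destruct (normA_triangle fam T0_family_nil y _ (Y_finite y Hy) Fz) as [F _].
  replace (fun w => y w - z w) with (fun w => y w + -1 * z w); auto.
  apply functional_extensionality. intros; ring.
Qed.

Lemma restrict_countable_net (S : W -> Prop) : countable_on S ->
  exists q : nat -> W -> R, forall y, Y y -> forall d, 0 < d ->
    exists n, forall a, fam a -> norm_on (fun w => restrict S y w - q n w) a <= d.
Proof.
  intros [f Hf].
  destruct (enumerable_prod _ _ enumerable_nat
              (enumerable_list _ (enumerable_prod _ _ enumerable_nat
                                    (enumerable_prod _ _ enumerable_nat enumerable_nat))))
    as [e He].
  exists (fun n => restrict S (grid_fun f (fst (e n)) (snd (e n)))).
  intros y Yy d Hd.
  destruct (Y_approx y (d / 2) Yy ltac:(lra)) as [z [s [Hs [Fyz Nyz]]]].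
  destruct (restrict_grid_approx S f z s (d / 2) Hf Hs ltac:(lra)) as [k [l Hkl]].
  destruct (He (k, l)) as [n En]. exists n. rewrite En. intros a Ha. cbn [fst snd].
  rewrite (norm_on_ext _ (fun w => restrict S (fun v => y v - z v) w
                                   + (restrict S z w - restrict S (grid_fun f k l) w)))
    by (intros w _; rewrite restrict_sub; ring).
  eapply Rle_trans; [apply norm_on_triangle|].
  assert (norm_on (restrict S (fun v => y v - z v)) a <= d / 2).
  { eapply Rle_trans; [apply norm_on_le; intros; apply restrict_abs|].
    left. eapply Rle_lt_trans; [|apply Nyz]. apply norm_on_le_normA; auto. }
  pose proof (Hkl a (proj1 Ha)). lra.
Qed.

(* Restriction to [S] embeds [Y] into a separable space; pull back a countable net. *)
Lemma separable_of_restrict_bounded_below (S : W -> Prop) (eps : R) :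
  countable_on S -> 0 < eps -> (forall y, Y y -> eps * N y <= N (restrict S y)) ->
  separable_sub fam Y.
Proof.
  intros HS He Hlow. destruct (restrict_countable_net S HS) as [q Hq].
  set (close := fun (j n : nat) y => Y y /\ forall a, fam a ->
     norm_on (fun w => restrict S y w - q n w) a <= / (INR j + 1)).
  set (pick := fun j n => match excluded_middle_informative (exists y, close j n y) with
                          | left H => proj1_sig (constructive_indefinite_description _ H)
                          | right _ => fun _ => 0 end).
  assert (pick_close : forall j n y, close j n y -> close j n (pick j n)).
  { intros j n y Hy. unfold pick. destruct excluded_middle_informative as [H|H]; [|exfalso; eauto].
    apply proj2_sig. }
  exists (fun m => pick (fst (of_nat m)) (snd (of_nat m))). split.
  { intros m. unfold pick. destruct excluded_middle_informative as [H|H]; [|apply Y_zero].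
    apply (proj2_sig (constructive_indefinite_description _ H)). }
  intros y Yy eta Heta.
  destruct (INR_unbounded (2 / (eps * eta))) as [j Hj].
  assert (Hj1 : 0 < INR j + 1) by (pose proof (pos_INR j); lra).
  destruct (Hq y Yy (/ (INR j + 1))) as [n Hn]; [apply Rinv_0_lt_compat; auto|].
  destruct (pick_close j n y (conj Yy Hn)) as [Yp Hp].
  exists (to_nat (j, n)). rewrite cancel_of_to. cbn [fst snd].
  set (x := fun w => y w - pick j n w).
  assert (Yx : Y x) by (apply Y_sub; auto).
  assert (Bx : N (restrict S x) <= 2 / (INR j + 1)).
  { apply (normA_finite_le fam T0_family_nil). intros a Ha.
    rewrite (norm_on_ext _ (fun w => (restrict S y w - q n w) - (restrict S (pick j n) w - q n w)))
      by (intros w _; unfold x; rewrite restrict_sub; ring).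
    eapply Rle_trans; [apply norm_on_sub|]. pose proof (Hn a Ha). pose proof (Hp a Ha). lra. }
  assert (2 / (INR j + 1) < eps * eta).
  { apply Rmult_lt_reg_r with (INR j + 1); auto.
    unfold Rdiv. rewrite Rmult_assoc, Rinv_l, Rmult_1_r by lra.
    assert (eps * eta * INR j > eps * eta * (2 / (eps * eta))) by (apply Rmult_gt_compat_l; nra).
    replace (eps * eta * (2 / (eps * eta))) with 2 in * by (field; nra). nra. }
  pose proof (Hlow x Yx). unfold vsub. fold x.
  apply Rmult_lt_reg_l with eps; lra.
Qed.

Lemma nonseparable_small_restriction (S : W -> Prop) (eps : R) :
  countable_on S -> 0 < eps -> ~ separable_sub fam Y ->
  exists y, Y y /\ normA_finite fam y /\ N y = 1 /\
    forall a, fam a -> norm_on (restrict S y) a <= eps.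
Proof.
  intros HS He HNS. apply NNPP. intros Hno. apply HNS.
  apply (separable_of_restrict_bounded_below S eps HS He).
  intros y Yy. pose proof (Y_finite y Yy) as Fy.
  destruct (normA_le fam T0_family_nil (restrict S y) y Fy (restrict_abs S y)) as [Fr _].
  destruct (Req_dec (N y) 0) as [E|Hn].
  { rewrite E, Rmult_0_r. apply (normA_ge0 fam T0_family_nil); auto. }
  pose proof (normA_ge0 fam T0_family_nil y Fy).
  set (r := / N y). assert (Hr : 0 < r) by (apply Rinv_0_lt_compat; lra).
  destruct (normA_scal fam T0_family_nil r y Fy) as [Fry Nry].
  rewrite Rabs_right in Nry by lra.
  destruct (classic (exists a, fam a /\ eps < norm_on (restrict S (fun w => r * y w)) a))
    as [[a [Ha Hlt]]|Hall].
  - rewrite (norm_on_ext _ (fun w => r * restrict S y w)) in Hlt by (intros; apply restrict_scal).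
    rewrite norm_on_scal, Rabs_right in Hlt by lra.
    pose proof (norm_on_le_normA fam (restrict S y) a Fr Ha).
    apply Rmult_le_reg_l with r; auto. rewrite <- Rmult_assoc, (Rmult_comm r eps), Rmult_assoc.
    unfold r. rewrite Rinv_l, Rmult_1_r by lra. fold r. nra.
  - exfalso. apply Hno. exists (fun w => r * y w).
    split; [apply Y_scal; auto|split; [auto|split]].
    + rewrite Nry. unfold r. field. lra.
    + intros a Ha. apply Rnot_lt_le. intros Hl. apply Hall. eauto.
Qed.

(** * Blocks *)

Record block := mkBlock { bl_y : W -> R; bl_z : W -> R; bl_supp : list W; bl_B : list W }.

Record good_block (o : block) (d : R) : Prop := {
  gb_in_Y : Y (bl_y o);
  gb_close : forall a, fam a -> norm_on (fun w => bl_y o w - bl_z o w) a <= d;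
  gb_z_bounded : forall a, fam a -> norm_on (bl_z o) a <= 2;
  gb_z_supp : forall w, ~ In w (bl_supp o) -> bl_z o w = 0;
  gb_B_supp : incl (bl_B o) (bl_supp o);
  gb_B_fam : fam (bl_B o);
  gb_B_large : 1 / 2 <= norm_on (bl_z o) (bl_B o) }.

Lemma good_block_weaken o d d' : d <= d' -> good_block o d -> good_block o d'.
Proof.
  intros Hd [H1 H2 H3 H4 H5 H6 H7]. split; auto.
  intros a Ha. eapply Rle_trans; [apply H2, Ha|exact Hd].
Qed.

Lemma good_block_outside (S : W -> Prop) (d : R) :
  countable_on S -> 0 < d -> d <= / 16 -> ~ separable_sub fam Y ->
  exists o, good_block o d /\ forall w, In w (bl_supp o) -> ~ S w.
Proof.
  intros HS Hd Hd16 HNS.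
  destruct (nonseparable_small_restriction S (d / 3) HS ltac:(lra) HNS) as [y [Yy [Fy [Ny HyS]]]].
  destruct (Y_approx y (d / 3) Yy ltac:(lra)) as [z0 [s0 [Hs0 [Fyz Nyz]]]].
  set (notS := fun w => if excluded_middle_informative (S w) then false else true).
  set (z := restrict (fun w => ~ S w) z0).
  set (s := filter notS s0).
  assert (Hyz : forall a, fam a -> norm_on (fun w => y w - z w) a <= d).
  { intros a Ha. pose proof (norm_on_sub_restrict_compl S y z0 a).
    pose proof (norm_on_le_normA fam _ a Fyz Ha). pose proof (HyS a Ha). unfold z. lra. }
  assert (Hzs : forall w, ~ In w s -> z w = 0).
  { intros w Hw. unfold z, restrict. destruct excluded_middle_informative as [nS|]; auto.
    apply Hs0. intros H. apply Hw, filter_In. unfold notS.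
    destruct excluded_middle_informative; tauto. }
  destruct (normA_approx fam T0_family_nil y (/ 4) ltac:(lra)) as [a [Ha Hay]]. rewrite Ny in Hay.
  set (inS := fun w => if excluded_middle_informative (In w s) then true else false).
  exists (mkBlock y z s (filter inS a)). split; [split; cbn|].
  - exact Yy.
  - exact Hyz.
  - intros a' Ha'. pose proof (norm_on_le_add_sub z y a'). pose proof (norm_on_le_normA fam y a' Fy Ha').
    rewrite norm_on_sub_sym in H. pose proof (Hyz a' Ha'). lra.
  - exact Hzs.
  - intros w Hw. apply filter_In in Hw as [_ Hw]. unfold inS in Hw.
    destruct excluded_middle_informative; easy.
  - apply T0_family_filter, Ha.
  - unfold norm_on at 1. rewrite sqsum_filter; fold (norm_on z a).
    + pose proof (norm_on_le_add_sub y z a). pose proof (Hyz a Ha). lra.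
    + intros w _. unfold inS. destruct excluded_middle_informative; [discriminate|].
      intros _. apply Hzs. assumption.
  - intros w Hw. apply filter_In in Hw as [_ Hw]. unfold notS in Hw.
    destruct excluded_middle_informative; easy.
Qed.

Hypothesis HNS : ~ separable_sub fam Y.

Lemma block_sequence_outside (S : W -> Prop) : countable_on S ->
  exists t : nat -> block, (forall k, good_block (t k) (tol k)) /\
    (forall k k', k <> k' -> disjoint (bl_supp (t k)) (bl_supp (t k'))) /\
    (forall k w, In w (bl_supp (t k)) -> ~ S w).
Proof.
  intros HS.
  destruct (sequence_choice (fun prev o => good_block o (tol (length prev)) /\
      (forall w, In w (bl_supp o) -> ~ S w) /\
      forall o', In o' prev -> disjoint (bl_supp o) (bl_supp o'))) as [t Ht].
  - intros prev.
    destruct (good_block_outside (fun w => S w \/ exists o', In o' prev /\ In w (bl_supp o'))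
               (tol (length prev))) as [o [Ho Hos]]; auto using tol_pos, tol_le.
    + apply countable_on_union; auto.
      apply countable_on_Union; [apply countable_on_In|]. intros; apply countable_on_In.
    + exists o. split; [auto|split].
      * intros w Hw HSw. apply (Hos w Hw). left; auto.
      * intros o' Ho' w Hw Hw'. apply (Hos w Hw). right. eauto.
  - assert (D : forall k k', (k' < k)%nat -> disjoint (bl_supp (t k)) (bl_supp (t k'))).
    { intros k k' Hlt. apply (Ht k). apply in_map, in_seq. lia. }
    exists t. split; [|split].
    + intros k. destruct (Ht k) as [H _]. rewrite length_map, length_seq in H. auto.
    + intros k k' Hne. destruct (Nat.lt_gt_cases k k') as [[L|L] _]; auto.
      intros w Hw Hw'. apply (D k' k L w Hw' Hw).
    + intros k. apply (Ht k).
Qed.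

(** * A homogeneous sequence of blocks *)

Variable lt : W -> W -> Prop.
Hypothesis Hw1 : is_omega1 W lt.

Lemma lt_trichotomy x y : lt x y \/ x = y \/ lt y x.
Proof. apply Hw1. Qed.

Lemma lt_wf : well_founded lt.
Proof. apply Hw1. Qed.

Lemma initial_segment_countable xi : countable_on (fun y => lt y xi).
Proof. apply Hw1. Qed.

Lemma omega1_uncountable : ~ countable_on (fun _ : W => True).
Proof. apply Hw1. Qed.

Lemma omega1_inhabited : inhabited W.
Proof.
  apply NNPP. intros HW. apply omega1_uncountable. exists (fun _ => 0%nat).
  intros x. exfalso. apply HW. constructor. exact x.
Qed.

Lemma omega1_free_pairs (V U : W -> Prop) (Rel : W -> W -> Prop) :
  ~ countable_on V -> ~ countable_on U ->
  (forall eta, V eta -> countable_on (fun th => U th /\ Rel eta th)) ->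
  exists g : W -> W * W, (forall xi, V (fst (g xi)) /\ U (snd (g xi))) /\
    (forall x y, x <> y -> fst (g x) <> fst (g y) /\ snd (g x) <> snd (g y)) /\
    (forall z xi, lt z xi -> ~ Rel (fst (g z)) (snd (g xi))).
Proof.
  intros HV HU HRel.
  set (Rl := fun (xi : W) (h : W -> W * W) (p : W * W) =>
    V (fst p) /\ (forall z, lt z xi -> fst p <> fst (h z)) /\ U (snd p) /\
    (forall z, lt z xi -> snd p <> snd (h z)) /\
    (forall z, lt z xi -> V (fst (h z)) -> ~ Rel (fst (h z)) (snd p))).
  destruct omega1_inhabited as [w0].
  destruct (wf_recursion_exists lt lt_wf (w0, w0) Rl) as [g Hg].
  - intros xi h h' p Hhh [A [B [C [D E]]]].
    repeat split; auto; intros z Hz; rewrite <- Hhh; auto.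
  - intros xi h.
    destruct (uncountable_avoid V (fun eta => exists z, lt z xi /\ eta = fst (h z)) HV)
      as [eta [Veta Heta]].
    { apply countable_on_Union; [apply initial_segment_countable|]. intros; apply countable_on_eq. }
    destruct (uncountable_avoid U
       (fun th => (exists z, lt z xi /\ th = snd (h z)) \/
                  (exists z, (lt z xi /\ V (fst (h z))) /\ (U th /\ Rel (fst (h z)) th)))
       HU) as [th [Uth Hth]].
    { apply countable_on_union.
      - apply countable_on_Union; [apply initial_segment_countable|]. intros; apply countable_on_eq.
      - apply countable_on_Union; [|intros z [_ Vz]; apply HRel; auto].
        apply (countable_on_sub (fun z => lt z xi)); [apply initial_segment_countable|].
        intros z [Hz _]; auto. }
    exists (eta, th). repeat split; cbn [fst snd]; auto.
    + intros z Hz E. apply Heta. eauto.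
    + intros z Hz E. apply Hth. left. eauto.
    + intros z Hz Vz Hc. apply Hth. right. eauto.
  - exists g. split; [intros xi; split; apply (Hg xi)|split].
    + intros x y Hxy. destruct (lt_trichotomy x y) as [L|[E|L]]; [|contradiction|].
      * destruct (Hg y) as [_ [H1 [_ [H2 _]]]]. split; intros E; [apply (H1 x L)|apply (H2 x L)]; auto.
      * destruct (Hg x) as [_ [H1 [_ [H2 _]]]]. split; [apply (H1 y L)|apply (H2 y L)].
    + intros z xi L. apply (Hg xi); auto. apply (Hg z).
Qed.

(* By recursion on [xi], each [nat]-sequence avoids the supports of all earlier ones. *)
Lemma omega1_blocks : exists O : W -> nat -> block,
  (forall xi k, good_block (O xi k) (tol k)) /\
  (forall xi k xi' k', (xi, k) <> (xi', k') -> disjoint (bl_supp (O xi k)) (bl_supp (O xi' k'))).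
Proof.
  set (Rl := fun (xi : W) (h : W -> nat -> block) (t : nat -> block) =>
    (forall k, good_block (t k) (tol k)) /\
    (forall k k', k <> k' -> disjoint (bl_supp (t k)) (bl_supp (t k'))) /\
    (forall z k k', lt z xi -> disjoint (bl_supp (t k)) (bl_supp (h z k')))).
  destruct (wf_recursion_exists lt lt_wf (fun _ => mkBlock (fun _ => 0) (fun _ => 0) nil nil) Rl)
    as [g Hg].
  - intros xi h h' t Hhh [A [B C]]. split; [|split]; auto. intros z k k' Hz. rewrite <- Hhh; auto.
  - intros xi h.
    destruct (block_sequence_outside (fun w => exists z, lt z xi /\ exists k', In w (bl_supp (h z k'))))
      as [t [Ht1 [Ht2 Ht3]]].
    { apply countable_on_Union; [apply initial_segment_countable|]. intros z _.
      apply (countable_on_sub (fun w => exists k', True /\ In w (bl_supp (h z k')))).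
      - apply countable_on_Union; [apply countable_on_nat|]. intros; apply countable_on_In.
      - intros w [k' Hk']. eauto. }
    exists t. split; [|split]; auto.
    intros z k k' Hz w Hw Hw'. apply (Ht3 k w Hw). eauto.
  - exists g. split; [intros xi k; apply (Hg xi)|].
    intros xi k xi' k' Hne.
    destruct (lt_trichotomy xi xi') as [L|[<-|L]].
    + intros w Hw Hw'. apply (proj2 (proj2 (Hg xi')) xi k' k L w Hw' Hw).
    + apply (proj1 (proj2 (Hg xi))). intros E. apply Hne. rewrite E. reflexivity.
    + apply (proj2 (proj2 (Hg xi)) xi' k k' L).
Qed.

Section Selection.

Hypothesis Hstr : forall A : W -> list W,
  (forall xi, A xi <> nil) -> (forall xi eta, xi <> eta -> disjoint (A xi) (A eta)) ->
  exists xi eta, lt xi eta /\ c0_const_on c (A xi) (A eta) i0.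

Variable Ob : W -> nat -> block.
Hypothesis Ob_good : forall xi k, good_block (Ob xi k) (tol k).
Hypothesis Ob_disjoint : forall xi k xi' k', (xi, k) <> (xi', k') ->
  disjoint (bl_supp (Ob xi k)) (bl_supp (Ob xi' k')).

Definition compatible (o o' : block) := c0_const_on c (bl_B o) (bl_B o') i0.

Definition large (U : W -> nat -> Prop) :=
  forall m, exists k, (m <= k)%nat /\ ~ countable_on (fun xi => U xi k).

Definition compatible_part (U : W -> nat -> Prop) xi k := fun xi' k' =>
  U xi' k' /\ (xi', k') <> (xi, k) /\ compatible (Ob xi k) (Ob xi' k').

Lemma Ob_B_nonempty xi k : bl_B (Ob xi k) <> nil.
Proof.
  intros E. pose proof (gb_B_large _ _ (Ob_good xi k)) as H.
  rewrite E, norm_on_nil in H. lra.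
Qed.

Lemma Ob_B_disjoint xi k xi' k' : (xi, k) <> (xi', k') ->
  disjoint (bl_B (Ob xi k)) (bl_B (Ob xi' k')).
Proof.
  intros Hne w Hw Hw'. apply (Ob_disjoint xi k xi' k' Hne w).
  - apply (gb_B_supp _ _ (Ob_good xi k)), Hw.
  - apply (gb_B_supp _ _ (Ob_good xi' k')), Hw'.
Qed.

(* Otherwise [omega1_free_pairs] yields pairs [(eta_xi, th_xi)], each [th_xi] incompatible
   with every earlier [eta_z], contradicting the strong coloring applied to [B eta_xi ++ B th_xi]. *)
Lemma uncountably_compatible (V U : W -> Prop) k0 k : k0 <> k ->
  ~ countable_on V -> ~ countable_on U ->
  exists eta, V eta /\ ~ countable_on (fun th => U th /\ compatible (Ob eta k0) (Ob th k)).
Proof.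
  intros Hk HV HU. apply NNPP. intros Hno.
  destruct (omega1_free_pairs V U (fun eta th => compatible (Ob eta k0) (Ob th k)) HV HU)
    as [g [_ [Hinj Hfree]]].
  { intros eta Veta. apply NNPP. intros Hc. apply Hno. eauto. }
  destruct (Hstr (fun xi => bl_B (Ob (fst (g xi)) k0) ++ bl_B (Ob (snd (g xi)) k)))
    as [x [y [Lxy Hc]]].
  - intros xi E. apply app_eq_nil in E as [E _]. apply (Ob_B_nonempty _ _ E).
  - intros x y Hxy a Ha Ha'. apply in_app_or in Ha, Ha'. destruct (Hinj x y Hxy) as [H1 H2].
    destruct Ha as [Ha|Ha], Ha' as [Ha'|Ha'];
      (eapply Ob_B_disjoint; [|exact Ha|exact Ha']); intros E; injection E; auto.
  - apply (Hfree x y Lxy). intros a b Ha Hb. apply Hc; apply in_or_app; auto.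
Qed.

Lemma large_compatible_part U : large U ->
  forall m, exists xi k, U xi k /\ (m <= k)%nat /\ large (compatible_part U xi k).
Proof.
  intros HU m. apply NNPP. intros Hno.
  destruct (HU m) as [k0 [Hk0 V0]].
  set (bound := fun xi m' => forall k', (m' <= k')%nat ->
                  countable_on (fun xi' => compatible_part U xi k0 xi' k')).
  assert (Hm : forall xi, U xi k0 -> exists m', bound xi m').
  { intros xi Uxi. apply NNPP. intros Hn. apply Hno. exists xi, k0. repeat split; auto.
    intros m'. apply NNPP. intros Hn2. apply Hn. exists m'. intros k' Hk'. apply NNPP. intros Hc.
    apply Hn2. exists k'. auto. }
  set (Kf := fun xi => epsilon (inhabits 0%nat) (bound xi)).
  destruct (uncountable_fiber (fun xi => U xi k0) Kf V0) as [ms Hms].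
  destruct (HU (Nat.max ms (S k0))) as [k [Hk Uk]].
  destruct (uncountably_compatible (fun xi => U xi k0 /\ Kf xi = ms) (fun th => U th k) k0 k)
    as [eta [[Ueta Keta] Heta]]; auto; [lia|].
  apply Heta.
  pose proof (epsilon_spec (inhabits 0%nat) (bound eta) (Hm eta Ueta) k) as Hs.
  fold (Kf eta) in Hs. rewrite Keta in Hs. apply (countable_on_sub _ _ (Hs ltac:(lia))).
  intros th [Uth Hc]. repeat split; auto. intros E. injection E. lia.
Qed.

(* A diagonal argument: iterate [large_compatible_part] along a decreasing chain of large
   sets, so that each later choice is compatible with all earlier ones. *)
Lemma compatible_selection : exists p : nat -> W * nat, (forall n, (n <= snd (p n))%nat) /\
  forall i j, (i < j)%nat -> p i <> p j /\
    compatible (Ob (fst (p i)) (snd (p i))) (Ob (fst (p j)) (snd (p j))).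
Proof.
  destruct (dependent_choice (fun s : nat * (W -> nat -> Prop) => large (snd s))
     (fun s s' => fst s' = S (fst s) /\ exists xi k, snd s xi k /\ (fst s <= k)%nat /\
                  snd s' = compatible_part (snd s) xi k) (0%nat, fun _ _ => True)) as [f [f0 Hf]].
  - intros m. exists m. split; auto. apply omega1_uncountable.
  - intros [n U] HU. destruct (large_compatible_part U HU n) as [xi [k [A [B C]]]].
    exists (S n, compatible_part U xi k). simpl. split; auto. split; auto. exists xi, k. auto.
  - assert (Ef : forall n, fst (f n) = n).
    { induction n; [rewrite f0; auto|]. destruct (Hf n) as [_ [E _]]. rewrite E, IHn. auto. }
    set (U := fun n => snd (f n)).
    set (step := fun n pk => U n (fst pk) (snd pk) /\ (n <= snd pk)%nat /\
                             U (S n) = compatible_part (U n) (fst pk) (snd pk)).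
    destruct omega1_inhabited as [w0].
    set (p := fun n => epsilon (inhabits (w0, 0%nat)) (step n)).
    assert (Hp : forall n, step n (p n)).
    { intros n. apply epsilon_spec. destruct (Hf n) as [_ [_ [xi [k [A [B C]]]]]].
      exists (xi, k). rewrite Ef in B. split; auto. }
    assert (Mono : forall i d xi k, U (S i + d)%nat xi k -> U (S i) xi k).
    { intros i d. induction d as [|d IH]; intros xi k H; [rewrite Nat.add_0_r in H; auto|].
      rewrite Nat.add_succ_r, (proj2 (proj2 (Hp (S i + d)%nat))) in H. apply IH, H. }
    exists p. split; [intros n; apply Hp|].
    intros i j Hij.
    assert (Uj : U (S i + (j - S i))%nat (fst (p j)) (snd (p j)))
      by (replace (S i + (j - S i))%nat with j by lia; apply Hp).
    apply Mono in Uj. rewrite (proj2 (proj2 (Hp i))) in Uj. destruct Uj as [_ [Hne Hc]].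
    split; auto. intros E. apply Hne. rewrite <- E. destruct (p i). reflexivity.
Qed.

End Selection.

(** * The embedding of l_2 *)

Section BlockSequence.

Variable bs : nat -> block.
Hypothesis bs_good : forall n, good_block (bs n) (tol n).
Hypothesis bs_disjoint : forall i j, i <> j -> disjoint (bl_supp (bs i)) (bl_supp (bs j)).
Hypothesis bs_compatible : forall i j, i <> j -> c0_const_on c (bl_B (bs i)) (bl_B (bs j)) i0.

Local Notation y_ n := (bl_y (bs n)).
Local Notation z_ n := (bl_z (bs n)).
Local Notation B_ n := (bl_B (bs n)).
Local Notation sq_sum u K m := (sum_from (fun n => u n ^ 2) K m).

Definition ysum u K m (w : W) := sum_from (fun n => u n * y_ n w) K m.
Definition zsum u K m (w : W) := sum_from (fun n => u n * z_ n w) K m.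
Definition dsum u K m (w : W) := sum_from (fun n => u n * (y_ n w - z_ n w)) K m.

Lemma ysum_split u K m w : ysum u K m w = zsum u K m w + dsum u K m w.
Proof. unfold ysum, zsum, dsum. induction m; simpl; [|rewrite IHm]; ring. Qed.

Lemma sq_sum_nonneg u K m : 0 <= sq_sum u K m.
Proof. apply sum_from_nonneg. intros; apply pow2_ge_0. Qed.

Lemma z_vanish_other n n' w : n <> n' -> In w (bl_supp (bs n)) -> z_ n' w = 0.
Proof. intros Hne Hw. apply (gb_z_supp _ _ (bs_good n')), (bs_disjoint n n' Hne w Hw). Qed.

Lemma zsum_vanish u K m w : (forall i, (i < m)%nat -> z_ (K + i)%nat w = 0) -> zsum u K m w = 0.
Proof.
  intros H. unfold zsum. induction m; simpl; auto.
  rewrite IHm by (intros; apply H; lia). rewrite H by lia. ring.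
Qed.

(* At each point at most one [z_ n] is nonzero. *)
Lemma sqsum_zsum u K m a : sqsum (zsum u K m) a = sum_from (fun n => u n ^ 2 * sqsum (z_ n) a) K m.
Proof.
  induction m; [apply sqsum_zero|].
  rewrite (sqsum_add_pointwise _ (zsum u K m) (fun w => u (K + m)%nat * z_ (K + m)%nat w)).
  { rewrite IHm, sqsum_scal. reflexivity. }
  intros w _. change (zsum u K (S m) w) with (zsum u K m w + u (K + m)%nat * z_ (K + m)%nat w).
  destruct (Req_dec (z_ (K + m)%nat w) 0) as [E|E]; [rewrite E; ring|].
  rewrite zsum_vanish; [ring|]. intros i Hi. apply (z_vanish_other (K + m)%nat); [lia|].
  apply NNPP. intros Hn. apply E, (gb_z_supp _ _ (bs_good _)), Hn.
Qed.

Lemma norm_on_zsum u K m a : fam a -> norm_on (zsum u K m) a <= 2 * sqrt (sq_sum u K m).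
Proof.
  intros Ha. pose proof (sq_sum_nonneg u K m). pose proof (sqrt_pos (sq_sum u K m)).
  unfold norm_on. rewrite sqsum_zsum. apply sqrt_le_of_le_sq; [lra|].
  rewrite Rpow_mult_distr, pow2_sqrt by auto.
  replace (2 ^ 2 * sq_sum u K m) with (sum_from (fun n => 4 * u n ^ 2) K m)
    by (rewrite sum_from_scal; ring).
  apply sum_from_le. intros i _. rewrite Rmult_comm. apply Rmult_le_compat_r; [apply pow2_ge_0|].
  rewrite <- norm_on_sq. pose proof (gb_z_bounded _ _ (bs_good (K + i)%nat) a Ha).
  pose proof (norm_on_ge0 (z_ (K + i)%nat) a). nra.
Qed.

Lemma norm_on_dsum u K m a : fam a -> norm_on (dsum u K m) a <= / 8 * sqrt (sq_sum u K m).
Proof.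
  intros Ha. apply Rle_trans with (sum_from (fun n => Rabs (u n) * tol n) K m).
  - induction m; [unfold norm_on, dsum; simpl; rewrite sqsum_zero, sqrt_0; lra|].
    change (dsum u K (S m)) with
      (fun w => dsum u K m w + u (K + m)%nat * (y_ (K + m)%nat w - z_ (K + m)%nat w)).
    eapply Rle_trans; [apply norm_on_triangle|]. simpl. apply Rplus_le_compat; auto.
    rewrite norm_on_scal. apply Rmult_le_compat_l; [apply Rabs_pos|].
    apply (gb_close _ _ (bs_good _)), Ha.
  - eapply Rle_trans; [apply (sum_from_le _ (fun n => sqrt (sq_sum u K m) * tol n))|].
    + intros i Hi. apply Rmult_le_compat_r; [left; apply tol_pos|].
      apply Rabs_le_sqrt_sum_from_sq; auto.
    + rewrite sum_from_scal. pose proof (sum_from_tol K m). pose proof (sqrt_pos (sq_sum u K m)).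
      nra.
Qed.

Lemma norm_on_ysum u K m a : fam a -> norm_on (ysum u K m) a <= 3 * sqrt (sq_sum u K m).
Proof.
  intros Ha. rewrite (norm_on_ext _ (fun w => zsum u K m w + dsum u K m w)) by (intros; apply ysum_split).
  eapply Rle_trans; [apply norm_on_triangle|].
  pose proof (norm_on_zsum u K m a Ha). pose proof (norm_on_dsum u K m a Ha).
  pose proof (sqrt_pos (sq_sum u K m)). lra.
Qed.

Fixpoint B_union (K : nat) : list W := match K with O => nil | S K => B_union K ++ B_ K end.

Lemma In_B_union K w : In w (B_union K) <-> exists i, (i < K)%nat /\ In w (B_ i).
Proof.
  induction K; simpl.
  - split; [intros []|intros [i [Hi _]]; lia].
  - rewrite in_app_iff, IHK. split.
    + intros [[i [Hi Hw]]|Hw]; [exists i; split; auto; lia|exists K; split; auto].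
    + intros [i [Hi Hw]]. destruct (Nat.eq_dec i K) as [->|Hne]; [right; auto|].
      left. exists i. split; auto. lia.
Qed.

Lemma B_union_fam K : fam (B_union K).
Proof.
  split.
  - induction K; simpl; [constructor|]. apply NoDup_app; auto; [apply (gb_B_fam _ _ (bs_good K))|].
    intros w Hw Hw'. apply In_B_union in Hw as [i [Hi Hw]].
    apply (bs_disjoint i K ltac:(lia) w); apply (gb_B_supp _ _ (bs_good _)); auto.
  - intros x y Hx Hy Hxy. apply In_B_union in Hx as [i [_ Hx]]. apply In_B_union in Hy as [j [_ Hy]].
    destruct (Nat.eq_dec i j) as [<-|Hne].
    + apply (gb_B_fam _ _ (bs_good i)); auto.
    + apply (bs_compatible i j Hne); auto.
Qed.

Lemma sqsum_zsum_B_union u K :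
  sqsum (zsum u 0 K) (B_union K) = sum_from (fun n => u n ^ 2 * sqsum (z_ n) (B_ n)) 0 K.
Proof.
  induction K; [reflexivity|]. cbn [B_union sum_from]. change (0 + K)%nat with K.
  rewrite sqsum_app, <- IHK. f_equal.
  - apply sqsum_ext. intros w Hw. apply In_B_union in Hw as [i [Hi Hw]].
    change (zsum u 0 (S K) w) with (zsum u 0 K w + u K * z_ K w).
    rewrite (z_vanish_other i K w) by (lia || apply (gb_B_supp _ _ (bs_good i)), Hw). ring.
  - rewrite <- sqsum_scal. apply sqsum_ext. intros w Hw.
    change (zsum u 0 (S K) w) with (zsum u 0 K w + u K * z_ K w).
    rewrite zsum_vanish; [ring|]. intros i Hi. apply (z_vanish_other K); [lia|].
    apply (gb_B_supp _ _ (bs_good K)), Hw.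
Qed.

Lemma norm_on_ysum_B_union u K : 3 / 8 * sqrt (sq_sum u 0 K) <= norm_on (ysum u 0 K) (B_union K).
Proof.
  pose proof (sq_sum_nonneg u 0 K). pose proof (sqrt_pos (sq_sum u 0 K)).
  assert (HZ : 1 / 2 * sqrt (sq_sum u 0 K) <= norm_on (zsum u 0 K) (B_union K)).
  { unfold norm_on. rewrite sqsum_zsum_B_union. apply le_sqrt_of_sq_le; [lra|].
    rewrite Rpow_mult_distr, pow2_sqrt by auto.
    replace ((1 / 2) ^ 2 * sq_sum u 0 K) with (sum_from (fun n => / 4 * u n ^ 2) 0 K)
      by (rewrite sum_from_scal; field).
    apply sum_from_le. intros i _. simpl (0 + i)%nat.
    pose proof (pow2_ge_0 (u i)). pose proof (gb_B_large _ _ (bs_good i)).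
    pose proof (norm_on_ge0 (z_ i) (B_ i)). rewrite <- norm_on_sq.
    assert (/ 4 <= norm_on (z_ i) (B_ i) ^ 2) by nra. nra. }
  pose proof (norm_on_dsum u 0 K (B_union K) (B_union_fam K)).
  pose proof (norm_on_le_add_sub (zsum u 0 K) (ysum u 0 K) (B_union K)) as Hm.
  rewrite (norm_on_ext (fun w => zsum u 0 K w - ysum u 0 K w) (fun w => -1 * dsum u 0 K w)) in Hm
    by (intros w _; rewrite ysum_split; ring).
  rewrite norm_on_scal, Rabs_m1 in Hm. lra.
Qed.


Lemma ysum_in_Y u K : Y (ysum u 0 K).
Proof.
  induction K; [apply Y_zero|].
  apply (Y_add (ysum u 0 K) (fun w => u K * y_ K w)); auto.
  apply Y_scal, (gb_in_Y _ _ (bs_good K)).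
Qed.

Section Coefficients.

Variable u : nat -> R.
Hypothesis Hu : in_l2 u.

Local Notation Su := (Series (fun n => u n ^ 2)).

Definition tail K := Su - sq_sum u 0 K.

Lemma sq_sum_le_Series K : sq_sum u 0 K <= Su.
Proof.
  assert (H : Rbar_le (sq_sum u 0 K) Su); [|exact H].
  apply (is_lim_seq_le (fun _ => sq_sum u 0 K) (fun n => sq_sum u 0 (n + K))).
  - intros n. rewrite Nat.add_comm, sum_from_split. pose proof (sq_sum_nonneg u K n). lra.
  - apply is_lim_seq_const.
  - apply (is_lim_seq_incr_n (fun n => sq_sum u 0 n) K).
    apply is_lim_seq_sum_from, Series_correct, Hu.
Qed.

Lemma tail_nonneg K : 0 <= tail K.
Proof. unfold tail. pose proof (sq_sum_le_Series K). lra. Qed.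

Lemma sq_sum_le_tail K m : sq_sum u K m <= tail K.
Proof. unfold tail. pose proof (sq_sum_le_Series (K + m)). rewrite sum_from_split in H. lra. Qed.

Lemma tail_small eps : 0 < eps -> exists N, forall n, (N <= n)%nat -> tail n < eps.
Proof.
  intros He.
  pose proof (is_lim_seq_sum_from _ _ (Series_correct _ Hu)) as Hlim.
  destruct (proj2 (is_lim_seq_spec _ _) Hlim (mkposreal eps He)) as [N HN].
  exists N. intros n Hn. specialize (HN n Hn). cbn [pos] in HN. unfold tail.
  rewrite Rabs_minus_sym in HN. pose proof (Rle_abs (Su - sq_sum u 0 n)). lra.
Qed.

Lemma tail_sqrt_small eps : 0 < eps -> exists K, 3 * sqrt (tail K) < eps.
Proof.
  intros He. destruct (tail_small ((eps / 3) ^ 2)) as [K HK]; [apply pow_lt; lra|].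
  exists K. specialize (HK K (le_n K)).
  assert (sqrt (tail K) < eps / 3) by (apply sqrt_lt_of_lt_sq; auto using tail_nonneg; lra).
  lra.
Qed.

Lemma ex_series_coef_y w : ex_series (fun n => u n * y_ n w).
Proof.
  apply (@ex_series_Cauchy R_AbsRing R_CompleteNormedModule). intros [eps He].
  destruct (tail_small ((eps / 3) ^ 2)) as [N HN]; [apply pow_lt; lra|].
  exists N. intros n m Hn Hm. cbn [pos].
  destruct (le_lt_dec n m) as [Hnm|Hnm]; [|rewrite sum_n_m_zero, norm_zero by auto; lra].
  replace m with (n + (m - n))%nat by lia. rewrite sum_n_m_sum_from.
  change (Rabs (ysum u n (S (m - n)) w) < eps).
  rewrite <- norm_on_single.
  eapply Rle_lt_trans; [apply norm_on_ysum, T0_family_single|].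
  pose proof (sq_sum_le_tail n (S (m - n))). pose proof (HN n Hn).
  pose proof (sq_sum_nonneg u n (S (m - n))).
  assert (sqrt (sq_sum u n (S (m - n))) < eps / 3) by (apply sqrt_lt_of_lt_sq; lra).
  lra.
Qed.

Definition l2_embedding (w : W) := Series (fun n => u n * y_ n w).

Lemma is_lim_ysum w : is_lim_seq (fun K => ysum u 0 K w) (l2_embedding w).
Proof. apply is_lim_seq_sum_from, Series_correct, ex_series_coef_y. Qed.

Lemma norm_on_embedding_sub_ysum K a : fam a ->
  norm_on (fun w => l2_embedding w - ysum u 0 K w) a <= 3 * sqrt (tail K).
Proof.
  intros Ha. pose proof (sqrt_pos (tail K)).
  unfold norm_on. apply sqrt_le_of_le_sq; [lra|].
  rewrite Rpow_mult_distr, pow2_sqrt by apply tail_nonneg.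
  apply (sqsum_le_of_lim (fun M => ysum u K M)).
  - intros w. apply (is_lim_seq_ext (fun M => ysum u 0 (M + K) w - ysum u 0 K w)).
    + intros M. unfold ysum. rewrite Nat.add_comm, sum_from_split. ring.
    + apply is_lim_seq_minus'; [|apply is_lim_seq_const].
      apply (is_lim_seq_incr_n (fun n => ysum u 0 n w) K), is_lim_ysum.
  - intros M. rewrite <- norm_on_sq.
    pose proof (norm_on_ysum u K M a Ha). pose proof (norm_on_ge0 (ysum u K M) a).
    pose proof (sq_sum_le_tail K M). pose proof (pow2_sqrt _ (sq_sum_nonneg u K M)).
    assert (norm_on (ysum u K M) a ^ 2 <= (3 * sqrt (sq_sum u K M)) ^ 2) by (apply pow_incr; lra).
    rewrite Rpow_mult_distr in H4. lra.
Qed.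

Lemma norm_on_embedding a : fam a -> norm_on l2_embedding a <= 3 * sqrt Su.
Proof.
  intros Ha. pose proof (norm_on_embedding_sub_ysum 0 a Ha) as H.
  unfold tail in H. simpl sum_from in H. rewrite Rminus_0_r in H.
  rewrite (norm_on_ext _ l2_embedding) in H; auto. intros w _. unfold ysum. simpl. ring.
Qed.

Lemma embedding_finite : normA_finite fam l2_embedding.
Proof. apply (normA_finite_le fam T0_family_nil _ _ norm_on_embedding). Qed.

Lemma embedding_in_Y : Y l2_embedding.
Proof.
  assert (Approx : forall eps, 0 < eps ->
            exists K, N (vsub l2_embedding (ysum u 0 K)) < eps).
  { intros eps He. destruct (tail_sqrt_small eps He) as [K HK]. exists K.
    eapply Rle_lt_trans; [|exact HK].
    apply (normA_finite_le fam T0_family_nil), norm_on_embedding_sub_ysum. }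
  apply Y_closed.
  - split; [apply embedding_finite|]. intros eps He.
    destruct (Approx (eps / 2)) as [K HK]; [lra|].
    destruct (Y_approx (ysum u 0 K) (eps / 2) (ysum_in_Y u K) ltac:(lra)) as [z [s [Hs [Fz Nz]]]].
    exists z. split; [exists s; auto|].
    destruct (normA_finite_le fam T0_family_nil (vsub l2_embedding (ysum u 0 K)) _
                (norm_on_embedding_sub_ysum K)) as [Fd _].
    destruct (normA_triangle fam T0_family_nil _ _ Fd Fz) as [_ Htri].
    replace (vsub l2_embedding z) with (fun w => vsub l2_embedding (ysum u 0 K) w + (ysum u 0 K w - z w)).
    + lra.
    + apply functional_extensionality. intros w. unfold vsub. ring.
  - intros eps He. destruct (Approx eps He) as [K HK]. exists (ysum u 0 K). auto using ysum_in_Y.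
Qed.

(* Take [K] with [tail K <= Su / 48 ^ 2]: on [B_union K] the partial sum has norm at least
   [3 / 8 * sqrt Su / 2], and the remainder at most [3 * sqrt Su / 48]. *)
Lemma normA_embedding_ge : / 16 * sqrt Su <= N l2_embedding.
Proof.
  pose proof (sq_sum_le_Series 0) as HS. simpl sum_from in HS. pose proof (sqrt_pos Su).
  pose proof (normA_ge0 fam T0_family_nil _ embedding_finite).
  destruct (Req_dec Su 0) as [E|Hne]; [rewrite E, sqrt_0; lra|].
  destruct (tail_small (Su / 2304)) as [K HK]; [lra|]. specialize (HK K (le_n K)).
  pose proof (tail_nonneg K).
  pose proof (norm_on_ysum_B_union u K) as Hlow.
  pose proof (norm_on_le_normA fam _ (B_union K) embedding_finite (B_union_fam K)).
  pose proof (norm_on_le_add_sub (ysum u 0 K) l2_embedding (B_union K)) as Hm.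
  rewrite norm_on_sub_sym in Hm.
  pose proof (norm_on_embedding_sub_ysum K (B_union K) (B_union_fam K)).
  assert (sqrt Su / 2 <= sqrt (sq_sum u 0 K)).
  { apply le_sqrt_of_sq_le; [lra|]. unfold tail in HK.
    replace ((sqrt Su / 2) ^ 2) with (sqrt Su ^ 2 / 4) by field. rewrite pow2_sqrt by lra. lra. }
  assert (sqrt (tail K) <= sqrt Su / 48).
  { apply sqrt_le_of_le_sq; [lra|].
    replace ((sqrt Su / 48) ^ 2) with (sqrt Su ^ 2 / 2304) by field. rewrite pow2_sqrt by lra. lra. }
  lra.
Qed.

End Coefficients.

Theorem contains_l2_of_block_sequence : contains_l2 fam Y.
Proof.
  exists l2_embedding. split; [|split; [|split]].
  - exact embedding_in_Y.
  - intros u v Hu Hv w. unfold l2_embedding.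
    rewrite (Series_ext _ (fun n => u n * y_ n w + v n * y_ n w)) by (intros; ring).
    apply Series_plus; apply ex_series_coef_y; auto.
  - intros r u Hu w. unfold l2_embedding.
    rewrite (Series_ext _ (fun n => r * (u n * y_ n w))) by (intros; ring). apply Series_scal_l.
  - exists (/ 16), 3. split; [lra|split; [lra|]]. intros u Hu. split.
    + apply normA_embedding_ge, Hu.
    + apply (normA_finite_le fam T0_family_nil), norm_on_embedding, Hu.
Qed.

End BlockSequence.

Lemma homogeneous_block_sequence : sym_coloring c ->
  (forall A : W -> list W,
    (forall xi, A xi <> nil) -> (forall xi eta, xi <> eta -> disjoint (A xi) (A eta)) ->
    exists xi eta, lt xi eta /\ c0_const_on c (A xi) (A eta) i0) ->
  exists bs : nat -> block, (forall n, good_block (bs n) (tol n)) /\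
    (forall i j, i <> j -> disjoint (bl_supp (bs i)) (bl_supp (bs j))) /\
    (forall i j, i <> j -> c0_const_on c (bl_B (bs i)) (bl_B (bs j)) i0).
Proof.
  intros csym Hstr.
  destruct omega1_blocks as [Ob [Ob_good Ob_disjoint]].
  destruct (compatible_selection Hstr Ob Ob_good Ob_disjoint) as [p [Hp_large Hp_compat]].
  exists (fun n => Ob (fst (p n)) (snd (p n))). split; [|split].
  - intros n. apply (good_block_weaken _ (tol (snd (p n)))), Ob_good. apply tol_antitone, Hp_large.
  - intros i j Hij. apply Ob_disjoint. rewrite <- !surjective_pairing.
    destruct (Nat.lt_gt_cases i j) as [[L|L] _]; auto; [apply Hp_compat, L|].
    intros E. apply (proj1 (Hp_compat j i L)). auto.
  - intros i j Hij. destruct (Nat.lt_gt_cases i j) as [[L|L] _]; auto; [apply Hp_compat, L|].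
    intros a b Ha Hb. rewrite csym. apply (proj2 (Hp_compat j i L)); auto.
Qed.

End Space.

Theorem proposition4p4 :
  forall (W : Type) (lt : W -> W -> Prop), is_omega1 W lt ->
  forall (I J : Type) (i0 i1 : I), i0 <> i1 -> inhabited J ->
  forall c : W -> W -> I * J,
    sym_coloring c -> strong_T_coloring lt i0 i1 c ->
  forall Y : (W -> R) -> Prop,
    closed_subspace (T0_family i0 c) Y ->
    ~ separable_sub (T0_family i0 c) Y ->
    contains_l2 (T0_family i0 c) Y.
Proof.
  intros W lt Hw1 I J i0 i1 _ _ c csym [_ Hstrong] Y HY HNS.
  destruct (homogeneous_block_sequence i0 c Y HY HNS lt Hw1 csym) as [bs [Hgood [Hdisj Hcompat]]].
  - intros A HA HB. apply (proj1 (Hstrong A HA HB)).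
  - apply (contains_l2_of_block_sequence i0 c Y HY bs Hgood Hdisj Hcompat).
Qed.
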